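(* Let $r\le N$, let $\mathbf{S}\in\mathbb{R}^{N\times N}$ be skew-symmetric, and let $\mathbf{B}\in\mathbb{R}^{N\times r}$ have all singular values $\sigma_1(\mathbf{B}),\dots,\sigma_r(\mathbf{B})$ in $[0,1]$. Let $[\mathbf{S}]=\mathbf{B}^\top\mathbf{S}\mathbf{B}$ and $\mathbf{Y}=\mathbf{I}_N+\mathbf{B}\big(\exp([\mathbf{S}])-\mathbf{I}_r\big)\mathbf{B}^\top$. Then $$\|\mathbf{Y}^\top\mathbf{Y}-\mathbf{I}_N\|_2\le\big(e^{\|\mathbf{S}\|_2}-1\big)^2\max_i\big|\sigma_i(\mathbf{B})^2(\sigma_i(\mathbf{B})^2-1)\big|\le\tfrac14\big(e^{\|\mathbf{S}\|_2}-1\big)^2.$$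
   Context: $\|\cdot\|_2$ denotes the spectral norm and $\exp$ the matrix exponential. (In the paper $\mathbf{B}$ is the output of Newton–Schulz iterations $\mathbf{M}_{k+1}=\frac12\mathbf{M}_k(3\mathbf{I}-\mathbf{M}_k^\top\mathbf{M}_k)$ started from a matrix normalised by its Frobenius norm plus $\epsilon>0$, which guarantees singular values in $[0,1]$.) *)

From HB Require Import structures.
From mathcomp Require Import all_boot all_order all_algebra.
From mathcomp Require Import all_classical all_reals all_analysis.
Set Implicit Arguments. Unset Strict Implicit. Unset Printing Implicit Defensive.
Import Order.TTheory GRing.Theory Num.Theory.
Import numFieldNormedType.Exports.
Local Open Scope classical_set_scope.
Local Open Scope ring_scope.

Definition vnorm2 (R : realType) (n : nat) (v : 'cV[R]_n) : R :=
  Num.sqrt (\sum_(i < n) v i 0 ^+ 2).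

Definition specnorm (R : realType) (m n : nat) (A : 'M[R]_(m, n)) : R :=
  sup [set vnorm2 (A *m x) | x in [set x : 'cV[R]_n | vnorm2 x <= 1]].

Definition mxpow (R : realType) (n : nat) (A : 'M[R]_n) (k : nat) : 'M[R]_n :=
  iter k (mulmx A) 1%:M.

Definition expm (R : realType) (n : nat) (A : 'M[R]_n) : 'M[R]_n :=
  \matrix_(i, j) limn (fun K : nat =>
     (\sum_(k < K) (k`!%:R)^-1 *: mxpow A k) i j).

(* The sigma i are then the singular values of B. *)
Definition thin_svd (R : realType) (N r : nat) (B : 'M[R]_(N, r))
  (U : 'M[R]_(N, r)) (sigma : 'I_r -> R) (V : 'M[R]_r) : Prop :=
  [/\ U^T *m U = 1%:M, V^T *m V = 1%:M, V *m V^T = 1%:M,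
      (forall i, 0 <= sigma i) &
      B = U *m diag_mx (\row_i sigma i) *m V^T].

From HB Require Import structures.
From mathcomp Require Import all_boot all_order all_algebra.
From mathcomp Require Import all_classical all_reals all_analysis.
From mathcomp Require Import ring lra.
Import Order.TTheory GRing.Theory Num.Theory.
Import numFieldNormedType.Exports.
Set Implicit Arguments.
Unset Strict Implicit.
Unset Printing Implicit Defensive.
Local Open Scope classical_set_scope.
Local Open Scope ring_scope.

(* Since [B^T S B] is skew-symmetric, Q := exp(B^T S B) is orthogonal, which turns
   Y^T Y - I into B (Q - I)^T (B^T B - I) (Q - I) B^T.  With B = U Sigma V^T and
   K := U^T S U one has V^T (Q - I) V = exp(Sigma K Sigma) - I = Sigma G Sigma, where
   G = sum_k (K Sigma^2)^k K / (k+1)! has norm at most sum_k |S|^(k+1) / (k+1)! =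
   e^|S| - 1.  Hence Y^T Y - I = U Sigma^2 G^T (Sigma (Sigma^2 - I) Sigma) G Sigma^2 U^T,
   whose middle factor is diagonal with entries sigma_i^2 (sigma_i^2 - 1), of modulus
   at most 1/4 since t (1 - t) <= 1/4.  Orthogonality of exp of a skew matrix comes
   from exp(-A) exp(A) = I, proved on partial sums by a Cauchy product. *)

Section MatrixLimits.
Variable R : realType.

Definition mx_cvgn m n (X : nat -> 'M[R]_(m, n)) (L : 'M[R]_(m, n)) :=
  forall i j, (fun K => X K i j) @ \oo --> L i j.

Lemma cvgn_sum_ord k (f : 'I_k -> nat -> R) (l : 'I_k -> R) :
  (forall i, f i @ \oo --> l i) -> (fun K => \sum_(i < k) f i K) @ \oo --> \sum_(i < k) l i.
Proof. by move=> fl; apply: cvg_big => //; exact: add_continuous. Qed.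

Lemma mx_cvgn_cst m n (L : 'M[R]_(m, n)) : mx_cvgn (fun=> L) L.
Proof. by move=> i j; exact: cvg_cst. Qed.

Lemma mx_cvgnD m n (X Y : nat -> 'M[R]_(m, n)) L M :
  mx_cvgn X L -> mx_cvgn Y M -> mx_cvgn (fun K => X K + Y K) (L + M).
Proof. by move=> XL YM i j; rewrite mxE; under eq_cvg do rewrite mxE; exact: cvgD. Qed.

Lemma mx_cvgnM m n p (X : nat -> 'M[R]_(m, n)) (Y : nat -> 'M[R]_(n, p)) L M :
  mx_cvgn X L -> mx_cvgn Y M -> mx_cvgn (fun K => X K *m Y K) (L *m M).
Proof.
move=> XL YM i j; rewrite mxE; under eq_cvg do rewrite mxE.
by apply: cvgn_sum_ord => l; exact: cvgM.
Qed.

Lemma mx_cvgn_tr m n (X : nat -> 'M[R]_(m, n)) L :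
  mx_cvgn X L -> mx_cvgn (fun K => (X K)^T) L^T.
Proof. by move=> XL i j; rewrite mxE; under eq_cvg do rewrite mxE; exact: XL. Qed.

Lemma mx_cvgnS m n (X : nat -> 'M[R]_(m, n)) L :
  mx_cvgn (fun K => X K.+1) L <-> mx_cvgn X L.
Proof.
split=> XL i j; first by rewrite -cvg_shiftS; exact: XL.
by have := XL i j; rewrite -cvg_shiftS; exact.
Qed.

Lemma eq_mx_cvgn m n (X Y : nat -> 'M[R]_(m, n)) L :
  X =1 Y -> mx_cvgn X L -> mx_cvgn Y L.
Proof. by move=> /funext <-. Qed.

Lemma mx_cvgn_unique m n (X : nat -> 'M[R]_(m, n)) L M :
  mx_cvgn X L -> mx_cvgn X M -> L = M.
Proof. by move=> XL XM; apply/matrixP => i j; exact: cvg_unique (XL i j) (XM i j). Qed.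

End MatrixLimits.

Arguments mx_cvgn_cst {R m n} L.

Section MatrixExponential.
Variable R : realType.
Implicit Types (m n : nat) (K : nat).

Definition exp_partial n (A : 'M[R]_n) K := \sum_(k < K) (k`!%:R)^-1 *: A ^+ k.

Definition mx_l1 m n (A : 'M[R]_(m, n)) := \sum_i \sum_j `|A i j|.

Lemma mx_l1_ge0 m n (A : 'M[R]_(m, n)) : 0 <= mx_l1 A.
Proof. by do 2 apply: sumr_ge0 => ? _. Qed.

Lemma row_l1_le_mx_l1 m n (A : 'M[R]_(m, n)) i : \sum_j `|A i j| <= mx_l1 A.
Proof. by rewrite /mx_l1 (bigD1 i) //= lerDl; do 2 apply: sumr_ge0 => ? _. Qed.

Lemma normr_exprn_entry n (A : 'M[R]_n) k i j : `|(A ^+ k) i j| <= mx_l1 A ^+ k.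
Proof.
elim: k i j => [|k IHk] i j.
  by rewrite expr0 !mxE; case: (i == j); rewrite ?normr1 ?normr0.
rewrite exprS mxE (le_trans (ler_norm_sum _ _ _)) //.
apply: (@le_trans _ _ (\sum_l `|A i l| * mx_l1 A ^+ k)).
  by apply: ler_sum => l _; rewrite normrM ler_wpM2l.
by rewrite -mulr_suml exprS ler_wpM2r ?exprn_ge0 ?mx_l1_ge0 ?row_l1_le_mx_l1.
Qed.

Lemma exp_partial_entry n (A : 'M[R]_n) i j K :
  exp_partial A K i j = series (fun k => (k`!%:R)^-1 * (A ^+ k) i j) K.
Proof. by rewrite summxE /series /= big_mkord; apply: eq_bigr => k _; rewrite mxE. Qed.

Lemma mx_cvgn_exp_partial n (A : 'M[R]_n) : mx_cvgn (exp_partial A) (expm A).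
Proof.
move=> i j; rewrite /expm mxE.
have mxpowE k : mxpow A k = A ^+ k by elim: k => //= k ->; rewrite exprS.
have -> : (fun K => (\sum_(k < K) (k`!%:R)^-1 *: mxpow A k) i j) = (fun K => exp_partial A K i j).
  by apply/funext => K; under eq_bigr do rewrite mxpowE.
have -> : (fun K => exp_partial A K i j) = series (fun k => (k`!%:R)^-1 * (A ^+ k) i j).
  by apply/funext => K; rewrite exp_partial_entry.
apply: normed_cvg; apply: (@series_le_cvg _ _ (exp_coeff (mx_l1 A))).
- by move=> k; rewrite normr_ge0.
- by move=> k; apply/exp_coeff_ge0/mx_l1_ge0.
- move=> k; rewrite /exp_coeff /= normrM ger0_norm ?invr_ge0 ?ler0n // mulrC.
  by rewrite ler_wpM2r ?invr_ge0 ?ler0n ?normr_exprn_entry.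
- exact: is_cvg_series_exp_coeff.
Qed.

Lemma sum_square_triangle (V : nmodType) (g : nat -> nat -> V) K :
  \sum_(k < K) \sum_(l < K) g k l =
  \sum_(d < K) \sum_(k < d.+1) g k (d - k)%N + \sum_(k < K) \sum_((K - k)%N <= l < K) g k l.
Proof.
have triangle L : \sum_(k < L) \sum_(0 <= l < (L - k)%N) g k l =
                  \sum_(d < L) \sum_(k < d.+1) g k (d - k)%N.
  elim: L => [|L IHL]; first by rewrite !big_ord0.
  rewrite big_ord_recr /= subSnn big_nat1 [RHS]big_ord_recr /= -IHL.
  rewrite [in RHS]big_ord_recr /= subnn addrA; congr (_ + _).
  rewrite -big_split /=; apply: eq_bigr => k _.
  by rewrite subSn ?(ltnW (ltn_ord k)) // big_nat_recr.
rewrite -triangle -big_split /=; apply: eq_bigr => k _.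
by rewrite -(big_mkord xpredT (g k)) (@big_cat_nat _ _ _ (K - k)) // leq_subr.
Qed.

Definition exp_cross n (A B : 'M[R]_n) k l :=
  ((k`!%:R)^-1 * (l`!%:R)^-1) *: (A ^+ k * B ^+ l).

Definition exp_tail n (A B : 'M[R]_n) K :=
  \sum_(k < K) \sum_((K - k)%N <= l < K) exp_cross A B k l.

Lemma exp_cross_binomial n (A B : 'M[R]_n) d : GRing.comm A B ->
  (d`!%:R)^-1 *: (A + B) ^+ d = \sum_(k < d.+1) exp_cross A B k (d - k)%N.
Proof.
move=> cAB; rewrite addrC exprDn_comm; last exact: commr_sym.
rewrite scaler_sumr; apply: eq_bigr => k _.
rewrite /exp_cross -(commrX _ (commr_sym (commrX _ cAB))).
rewrite -[_ *+ 'C(d, k)]scaler_nat scalerA; congr (_ *: _).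
have kd : (k <= d)%N by rewrite -ltnS.
have := bin_fact kd; move/(congr1 (fun z : nat => z%:R : R)); rewrite !natrM => <-.
have binC0 : ('C(d, k)%:R : R) != 0 by rewrite pnatr_eq0 -lt0n bin_gt0.
by rewrite !invfM mulrC !mulrA mulfV // mul1r.
Qed.

Lemma exp_partialM n (A B : 'M[R]_n) K : GRing.comm A B ->
  exp_partial A K * exp_partial B K = exp_partial (A + B) K + exp_tail A B K.
Proof.
move=> cAB; have -> : exp_partial A K * exp_partial B K =
                      \sum_(k < K) \sum_(l < K) exp_cross A B k l.
  rewrite mulr_suml; apply: eq_bigr => k _; rewrite mulr_sumr; apply: eq_bigr => l _.
  by rewrite /exp_cross -!mulmxE -scalemxAl -scalemxAr scalerA.
rewrite sum_square_triangle; congr (_ + _).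
by apply: eq_bigr => d _; rewrite exp_cross_binomial.
Qed.

(* Scalar exponential series are handled as 1 x 1 matrices, so that [exp_partialM]
   applies to them. *)
Lemma exp_partial_scalar (c : R) K : exp_partial (c%:M : 'M[R]_1) K 0 0 = series (exp_coeff c) K.
Proof.
rewrite exp_partial_entry /series /=; apply: eq_bigr => k _.
by rewrite -rmorphXn mxE mulr1n /exp_coeff /= mulrC.
Qed.

Lemma cvgn_exp_tail_scalar (c : R) : (fun K => exp_tail (c%:M : 'M[R]_1) c%:M K 0 0) @ \oo --> 0.
Proof.
have c1 : GRing.comm (c%:M : 'M[R]_1) c%:M by [].
have entry00 (X Y : 'M[R]_1) : (X * Y) 0 0 = X 0 0 * Y 0 0 by rewrite !mxE big_ord1.
have exp_partial_cvg (x : R) : (fun K => exp_partial (x%:M : 'M[R]_1) K 0 0) @ \oo --> expR x.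
  under eq_fun do rewrite exp_partial_scalar; exact: is_cvg_series_exp_coeff.
have -> : (fun K => exp_tail (c%:M : 'M[R]_1) c%:M K 0 0) = (fun K =>
    exp_partial (c%:M : 'M[R]_1) K 0 0 * exp_partial (c%:M : 'M[R]_1) K 0 0
    - exp_partial ((c + c)%:M : 'M[R]_1) K 0 0).
  by apply/funext => K; rewrite -entry00 exp_partialM // -raddfD mxE addrAC subrr add0r.
rewrite -(subrr (expR (c + c))) [X in _ --> X - _]expRD.
apply: cvgB; first apply: cvgM.
all: exact: exp_partial_cvg.
Qed.

Lemma trmxX n (A : 'M[R]_n) k : (A ^+ k)^T = A^T ^+ k.
Proof.
elim: k => [|k IHk]; first by rewrite !expr0 trmx1.
by rewrite exprS exprSr -IHk -mulmxE trmx_mul mulmxE.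
Qed.

Lemma exp_partial_tr n (A : 'M[R]_n) K : (exp_partial A K)^T = exp_partial A^T K.
Proof.
by rewrite /exp_partial raddf_sum /=; apply: eq_bigr => k _; rewrite linearZ /= trmxX.
Qed.

Lemma exp_partial0 n K : exp_partial (0 : 'M[R]_n) K.+1 = 1.
Proof.
rewrite /exp_partial big_ord_recl /= expr0 fact0 invr1 scale1r big1 ?addr0 // => k _.
by rewrite expr0n /= scaler0.
Qed.

(* The Cauchy-product tail of exp(-A) exp(A) is dominated entrywise by the tail for
   e^a e^a - e^(a + a), with a := mx_l1 A, which tends to 0. *)
Lemma normr_exp_tail_opp n (A : 'M[R]_n) K i j :
  `|exp_tail (- A) A K i j| <= exp_tail ((mx_l1 A)%:M : 'M[R]_1) (mx_l1 A)%:M K 0 0.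
Proof.
rewrite !summxE (le_trans (ler_norm_sum _ _ _)) //; apply: ler_sum => k _.
rewrite !summxE (le_trans (ler_norm_sum _ _ _)) //; apply: ler_sum => l _.
have fact_ge0 p : 0 <= (p`!%:R : R)^-1 by rewrite invr_ge0 ler0n.
have oppX p : (- A) ^+ p = (-1) ^+ p *: A ^+ p.
  elim: p => [|p IHp]; first by rewrite !expr0 scale1r.
  by rewrite !exprS IHp mulN1r scaleNr mulNr -!mulmxE scalemxAr.
rewrite mxE [X in _ <= X]mxE normrM ger0_norm ?mulr_ge0 //.
apply: ler_wpM2l; first exact: mulr_ge0.
rewrite oppX -mulmxE -scalemxAl mulmxE -!exprD -rmorphXn !mxE /= mulr1n.
by rewrite normrM normrX normrN1 expr1n mul1r normr_exprn_entry.
Qed.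

Lemma expm_skew_orthogonal n (A : 'M[R]_n) : A^T = - A -> (expm A)^T *m expm A = 1%:M.
Proof.
move=> skA.
have toQtQ : mx_cvgn (fun K => exp_partial (- A) K * exp_partial A K) ((expm A)^T *m expm A).
  apply: mx_cvgnM; last exact: mx_cvgn_exp_partial.
  apply: (eq_mx_cvgn (X := fun K => (exp_partial A K)^T)); first by move=> K; rewrite exp_partial_tr skA.
  exact/mx_cvgn_tr/mx_cvgn_exp_partial.
have to1 : mx_cvgn (fun K => exp_partial (- A) K * exp_partial A K) (1%:M + 0).
  apply/mx_cvgnS.
  apply: (eq_mx_cvgn (X := fun K => 1%:M + exp_tail (- A) A K.+1)).
    by move=> K; rewrite exp_partialM ?addNr ?exp_partial0 // /GRing.comm mulNr mulrN.
  apply: mx_cvgnD; first exact: mx_cvgn_cst.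
  move=> i j; rewrite mxE.
  pose t K := exp_tail ((mx_l1 A)%:M : 'M[R]_1) (mx_l1 A)%:M K.+1 0 0.
  have t0 : t @ \oo --> 0 by have := cvgn_exp_tail_scalar (mx_l1 A); rewrite -cvg_shiftS; exact.
  apply: (@squeeze_cvgr _ _ _ _ (fun K => - t K) t); last 2 first.
  - by rewrite -oppr0; exact: cvgN.
  - exact: t0.
  by apply: nearW => K; rewrite -ler_norml normr_exp_tail_opp.
by rewrite (mx_cvgn_unique toQtQ to1) addr0.
Qed.

End MatrixExponential.

Section EuclideanNorm.
Variable R : realType.
Implicit Types (m n : nat).

Definition dotmx n (u v : 'cV[R]_n) := \sum_i u i 0 * v i 0.

Lemma dotmx_mul m n (M : 'M[R]_(m, n)) u v : dotmx (M *m u) v = dotmx u (M^T *m v).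
Proof.
have dotE p (x y : 'cV[R]_p) : dotmx x y = (x^T *m y) 0 0.
  by rewrite mxE; apply: eq_bigr => i _; rewrite mxE.
by rewrite !dotE trmx_mul mulmxA.
Qed.

Lemma dotmx_ge0 n (u : 'cV[R]_n) : 0 <= dotmx u u.
Proof. by apply: sumr_ge0 => i _; rewrite -expr2 sqr_ge0. Qed.

Lemma dotmx_eq0 n (u : 'cV[R]_n) : dotmx u u = 0 -> u = 0.
Proof.
move=> /eqP; rewrite psumr_eq0 => [/allP u0|i _]; last by rewrite -expr2 sqr_ge0.
apply/matrixP => i j; rewrite (ord1 j) mxE; apply/eqP.
by have /implyP := u0 i (mem_index_enum i); rewrite mulf_eq0 orbb; exact.
Qed.

Lemma vnorm2E n (u : 'cV[R]_n) : vnorm2 u = Num.sqrt (dotmx u u).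
Proof. by congr Num.sqrt; apply: eq_bigr => i _; rewrite expr2. Qed.

Lemma vnorm2_ge0 n (u : 'cV[R]_n) : 0 <= vnorm2 u.
Proof. exact: sqrtr_ge0. Qed.

Lemma vnorm2_sqr n (u : 'cV[R]_n) : vnorm2 u ^+ 2 = dotmx u u.
Proof. by rewrite vnorm2E sqr_sqrtr ?dotmx_ge0. Qed.

Lemma vnorm2_eq0 n (u : 'cV[R]_n) : vnorm2 u = 0 -> u = 0.
Proof. by move=> u0; apply: dotmx_eq0; rewrite -vnorm2_sqr u0 expr0n. Qed.

Lemma vnorm2Z n (a : R) (u : 'cV[R]_n) : vnorm2 (a *: u) = `|a| * vnorm2 u.
Proof.
rewrite !vnorm2E -sqrtr_sqr -sqrtrM ?sqr_ge0 //; congr Num.sqrt.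
by rewrite /dotmx mulr_sumr; apply: eq_bigr => i _; rewrite !mxE; ring.
Qed.

Lemma vnorm2_0 n : vnorm2 (0 : 'cV[R]_n) = 0.
Proof. by rewrite -(scale0r 0) vnorm2Z normr0 mul0r. Qed.

Lemma cauchy_schwarz n (u v : 'cV[R]_n) : dotmx u v <= vnorm2 u * vnorm2 v.
Proof.
have [->|u0] := eqVneq u 0.
  by rewrite vnorm2_0 mul0r /dotmx big1 // => i _; rewrite mxE mul0r.
have [->|v0] := eqVneq v 0.
  by rewrite vnorm2_0 mulr0 /dotmx big1 // => i _; rewrite mxE mulr0.
have vnorm2_gt0 n' (w : 'cV[R]_n') : w != 0 -> 0 < vnorm2 w.
  by move=> w0; rewrite lt0r vnorm2_ge0 andbT; apply: contra_neq w0; exact: vnorm2_eq0.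
set a := vnorm2 u; set b := vnorm2 v.
have ab_gt0 : 0 < a * b by rewrite mulr_gt0 ?vnorm2_gt0.
have : 0 <= \sum_i (b * u i 0 - a * v i 0) ^+ 2 by apply: sumr_ge0 => i _; exact: sqr_ge0.
have -> : \sum_i (b * u i 0 - a * v i 0) ^+ 2 =
          b ^+ 2 * dotmx u u - 2 * (a * b) * dotmx u v + a ^+ 2 * dotmx v v.
  by rewrite /dotmx !mulr_sumr -sumrB -big_split /=; apply: eq_bigr => i _; ring.
rewrite -!vnorm2_sqr -/a -/b => h.
by rewrite -subr_ge0 -(pmulr_rge0 _ ab_gt0); nra.
Qed.

Lemma vnorm2D n (u v : 'cV[R]_n) : vnorm2 (u + v) <= vnorm2 u + vnorm2 v.
Proof.
have -> : vnorm2 (u + v) = Num.sqrt (vnorm2 u ^+ 2 + 2 * dotmx u v + vnorm2 v ^+ 2).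
  rewrite vnorm2E !vnorm2_sqr /dotmx; congr Num.sqrt.
  by rewrite mulr_sumr -!big_split /=; apply: eq_bigr => i _; rewrite !mxE; ring.
rewrite -[_ + vnorm2 v]ger0_norm ?addr_ge0 ?vnorm2_ge0 // -sqrtr_sqr ler_sqrt ?sqr_ge0 //.
have := cauchy_schwarz u v; nra.
Qed.

Lemma vnorm2_sum n k (f : 'I_k -> 'cV[R]_n) : vnorm2 (\sum_i f i) <= \sum_i vnorm2 (f i).
Proof.
elim/big_rec2: _ => [|i y1 y2 _ IH]; first by rewrite vnorm2_0.
by rewrite (le_trans (vnorm2D _ _)) // lerD2l.
Qed.

Lemma vnorm2_le_l1 n (v : 'cV[R]_n) : vnorm2 v <= \sum_i `|v i 0|.
Proof.
have vnorm2_delta i : vnorm2 (delta_mx i 0 : 'cV[R]_n) = 1.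
  rewrite vnorm2E /dotmx (bigD1 i) //= big1 => [|k /negPf ki]; last by rewrite !mxE ki mul0r.
  by rewrite !mxE eqxx mulr1 addr0 sqrtr1.
rewrite {1}(matrix_sum_delta v) (le_trans (vnorm2_sum _)) //; apply: ler_sum => i _.
by rewrite big_ord1 vnorm2Z vnorm2_delta mulr1.
Qed.

Lemma normr_entry_le_vnorm2 n (x : 'cV[R]_n) i : `|x i 0| <= vnorm2 x.
Proof.
rewrite vnorm2E -sqrtr_sqr ler_sqrt ?dotmx_ge0 // /dotmx (bigD1 i) //= expr2 lerDl.
by apply: sumr_ge0 => j _; rewrite -expr2 sqr_ge0.
Qed.

End EuclideanNorm.

Section OperatorBounds.
Variable R : realType.
Implicit Types (m n p : nat) (a b c : R).

Definition opbound m n (M : 'M[R]_(m, n)) c := forall x, vnorm2 (M *m x) <= c * vnorm2 x.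

Lemma opboundW m n (M : 'M[R]_(m, n)) a b : opbound M a -> a <= b -> opbound M b.
Proof. by move=> Ma ab x; rewrite (le_trans (Ma x)) // ler_wpM2r ?vnorm2_ge0. Qed.

Lemma opboundM m n p (M : 'M[R]_(m, n)) (P : 'M[R]_(n, p)) a b :
  0 <= a -> opbound M a -> opbound P b -> opbound (M *m P) (a * b).
Proof. by move=> a0 Ma Pb x; rewrite -mulmxA (le_trans (Ma _)) // -mulrA ler_wpM2l. Qed.

Lemma opboundZ m n (M : 'M[R]_(m, n)) a c : opbound M a -> opbound (c *: M) (`|c| * a).
Proof. by move=> Ma x; rewrite -scalemxAl vnorm2Z -mulrA ler_wpM2l. Qed.

Lemma opbound_sum m n k (F : 'I_k -> 'M[R]_(m, n)) (c : 'I_k -> R) :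
  (forall i, opbound (F i) (c i)) -> opbound (\sum_i F i) (\sum_i c i).
Proof.
move=> Fc x; rewrite mulmx_suml (le_trans (vnorm2_sum _)) // mulr_suml.
by apply: ler_sum => i _; exact: Fc.
Qed.

Lemma opbound1 n : opbound (1%:M : 'M[R]_n) 1.
Proof. by move=> x; rewrite mul1mx mul1r. Qed.

Lemma opboundX n (M : 'M[R]_n) a k : 0 <= a -> opbound M a -> opbound (M ^+ k) (a ^+ k).
Proof.
move=> a0 Ma; elim: k => [|k IHk]; first by rewrite !expr0; exact: opbound1.
by rewrite !exprS; apply: opboundM.
Qed.

Lemma opbound_tr m n (M : 'M[R]_(m, n)) a : 0 <= a -> opbound M a -> opbound M^T a.
Proof.
move=> a0 Ma y; have [->|t0] := eqVneq (vnorm2 (M^T *m y)) 0; first by rewrite mulr_ge0 ?vnorm2_ge0.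
have t_gt0 : 0 < vnorm2 (M^T *m y) by rewrite lt0r t0 vnorm2_ge0.
rewrite -(ler_pM2l t_gt0) mulrA [_ * a]mulrC -expr2 vnorm2_sqr -dotmx_mul.
by rewrite (le_trans (cauchy_schwarz _ _)) // ler_wpM2r ?vnorm2_ge0.
Qed.

Lemma opbound_isometry m n (U : 'M[R]_(m, n)) : U^T *m U = 1%:M -> opbound U 1.
Proof. by move=> UtU x; rewrite mul1r !vnorm2E dotmx_mul mulmxA UtU mul1mx. Qed.

Lemma opbound_diag n (d : 'I_n -> R) c :
  0 <= c -> (forall i, `|d i| <= c) -> opbound (diag_mx (\row_i d i)) c.
Proof.
move=> c0 dc x; rewrite !vnorm2E -[c]ger0_norm // -sqrtr_sqr -sqrtrM ?sqr_ge0 //.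
rewrite ler_sqrt ?mulr_ge0 ?sqr_ge0 ?dotmx_ge0 // /dotmx mulr_sumr.
apply: ler_sum => i _; rewrite mul_diag_mx !mxE -!expr2 exprMn ler_wpM2r ?sqr_ge0 //.
by rewrite -[_ ^+ 2]ger0_norm ?sqr_ge0 // normrX lerXn2r ?nnegrE ?dc.
Qed.

Lemma opbound_mx_l1 m n (M : 'M[R]_(m, n)) : opbound M (mx_l1 M).
Proof.
move=> x; rewrite (le_trans (vnorm2_le_l1 _)) // /mx_l1 mulr_suml; apply: ler_sum => i _.
rewrite mxE (le_trans (ler_norm_sum _ _ _)) // mulr_suml; apply: ler_sum => j _.
by rewrite normrM ler_wpM2l // normr_entry_le_vnorm2.
Qed.

Lemma opbound_cvgn m n (X : nat -> 'M[R]_(m, n)) L c :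
  mx_cvgn X L -> (forall K, opbound (X K) c) -> opbound L c.
Proof.
move=> XL Xc x; have c0 : 0 <= c * vnorm2 x by exact: le_trans (vnorm2_ge0 _) (Xc 0%N x).
have XxLx : mx_cvgn (fun K => X K *m x) (L *m x) by apply: mx_cvgnM XL _; exact: mx_cvgn_cst.
have : (fun K => dotmx (X K *m x) (X K *m x)) @ \oo --> dotmx (L *m x) (L *m x).
  by apply: cvgn_sum_ord => i; apply: cvgM; exact: XxLx.
move=> /ler_cvg_to /(_ (cvg_cst ((c * vnorm2 x) ^+ 2))) LxLx.
rewrite vnorm2E -(ger0_norm c0) -sqrtr_sqr ler_sqrt ?sqr_ge0 //; apply: LxLx.
by apply: nearW => K; rewrite -vnorm2_sqr lerXn2r ?nnegrE ?vnorm2_ge0 ?Xc.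
Qed.

Let specnorm_set m n (M : 'M[R]_(m, n)) :=
  [set vnorm2 (M *m x) | x in [set x : 'cV[R]_n | vnorm2 x <= 1]].

Let specnorm_set0 m n (M : 'M[R]_(m, n)) : specnorm_set M 0.
Proof. by exists 0; rewrite /= ?vnorm2_0 ?ler01 // mulmx0 vnorm2_0. Qed.

Lemma has_sup_specnorm m n (M : 'M[R]_(m, n)) : has_sup (specnorm_set M).
Proof.
split; first by exists 0; exact: specnorm_set0.
exists (mx_l1 M) => _ [x /= x1 <-]; rewrite (le_trans (opbound_mx_l1 M x)) //.
by rewrite -[leRHS]mulr1 ler_wpM2l // mx_l1_ge0.
Qed.

Lemma specnorm_ge0 m n (M : 'M[R]_(m, n)) : 0 <= specnorm M.
Proof. exact: sup_upper_bound (has_sup_specnorm M) _ (specnorm_set0 M). Qed.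

Lemma opbound_specnorm m n (M : 'M[R]_(m, n)) : opbound M (specnorm M).
Proof.
move=> x; have [/vnorm2_eq0 ->|x0] := eqVneq (vnorm2 x) 0.
  by rewrite mulmx0 !vnorm2_0 mulr0.
have x_gt0 : 0 < vnorm2 x by rewrite lt0r x0 vnorm2_ge0.
have : (vnorm2 x)^-1 * vnorm2 (M *m x) <= specnorm M.
  rewrite -[_^-1]ger0_norm ?invr_ge0 ?vnorm2_ge0 // -vnorm2Z scalemxAr.
  apply: sup_upper_bound (has_sup_specnorm M) _ _; exists ((vnorm2 x)^-1 *: x) => //=.
  by rewrite vnorm2Z ger0_norm ?invr_ge0 ?vnorm2_ge0 // mulVf.
by rewrite ler_pdivrMl // mulrC.
Qed.

Lemma specnorm_le m n (M : 'M[R]_(m, n)) c : 0 <= c -> opbound M c -> specnorm M <= c.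
Proof.
move=> c0 Mc; apply: ge_sup; first by exists 0; exact: specnorm_set0.
by move=> _ [x /= x1 <-]; rewrite (le_trans (Mc x)) // -[leRHS]mulr1 ler_wpM2l.
Qed.

Lemma opbound_conj_isometry m n (U : 'M[R]_(m, n)) (S : 'M[R]_m) :
  U^T *m U = 1%:M -> opbound (U^T *m S *m U) (specnorm S).
Proof.
move=> UtU; have U1 := opbound_isometry UtU.
rewrite -[specnorm S]mul1r -[1 * _]mulr1.
apply: (opboundM _ _ U1); first by rewrite mul1r specnorm_ge0.
by apply: (opboundM _ _ (opbound_specnorm S)); [exact: ler01 | exact: opbound_tr].
Qed.

End OperatorBounds.

Section SandwichedExponential.
Variable R : realType.
Implicit Types (n : nat) (K : nat).

Lemma exp_partial_conj n (V X : 'M[R]_n) K :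
  V^T *m V = 1%:M -> V^T *m exp_partial (V *m X *m V^T) K *m V = exp_partial X K.
Proof.
move=> VtV; rewrite mulmx_sumr mulmx_suml; apply: eq_bigr => k _.
rewrite -scalemxAr -scalemxAl; congr (_ *: _).
elim: (k : nat) => [|j IHj]; first by rewrite !expr0 mulmx1 VtV.
by rewrite !exprS -!mulmxE !mulmxA VtV mul1mx -IHj !mulmxA.
Qed.

Definition exp_sandwich_factor n (P X : 'M[R]_n) K :=
  \sum_(k < K) ((k.+1)`!%:R)^-1 *: ((X *m P *m P) ^+ k *m X).

Lemma exp_partial_sandwich n (P X : 'M[R]_n) K :
  exp_partial (P *m X *m P) K.+1 - 1%:M = P *m exp_sandwich_factor P X K *m P.
Proof.
rewrite /exp_partial big_ord_recl /= expr0 fact0 invr1 scale1r addrAC subrr add0r.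
rewrite mulmx_sumr mulmx_suml; apply: eq_bigr => k _.
rewrite /bump leq0n add1n -scalemxAr -scalemxAl; congr (_ *: _).
elim: (k : nat) => [|j IHj]; first by rewrite expr1 expr0 mul1mx.
by rewrite exprS IHj [in RHS]exprS -!mulmxE !mulmxA.
Qed.

Lemma series_exp_coeff_le (s : R) K : 0 <= s -> series (exp_coeff s) K <= expR s.
Proof.
move=> s0; apply: nondecreasing_cvgn_le; last exact: is_cvg_series_exp_coeff.
by apply: nondecreasing_series => k _; rewrite mulr_ge0 ?exprn_ge0 ?invr_ge0 ?ler0n.
Qed.

Lemma opbound_exp_sandwich_factor n (P X : 'M[R]_n) s K :
  0 <= s -> opbound X s -> opbound P 1 -> opbound (exp_sandwich_factor P X K) (expR s - 1).
Proof.
move=> s0 Xs P1.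
have XPP : opbound (X *m P *m P) s.
  by rewrite -[s]mulr1 -[s * 1]mulr1; apply: opboundM => //; [rewrite mulr1 | apply: opboundM].
apply: (opboundW (a := \sum_(k < K) `|((k.+1)`!%:R)^-1| * (s ^+ k * s))).
  apply: opbound_sum => k; apply: opboundZ; apply: opboundM => //; [exact: exprn_ge0|exact: opboundX].
have := series_exp_coeff_le K.+1 s0; rewrite /series /= big_nat_recl // big_mkord.
rewrite /exp_coeff /= expr0 fact0 divr1 addrC -lerBrDr; apply: le_trans.
by apply: ler_sum => k _; rewrite ger0_norm ?invr_ge0 ?ler0n // -exprSr mulrC.
Qed.

End SandwichedExponential.

Section OrthogonalUpdate.
Variable R : realType.

Lemma gram_update_sub1 N r (B : 'M[R]_(N, r)) (Q : 'M[R]_r) : Q^T *m Q = 1%:M ->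
  let Y := 1%:M + B *m (Q - 1%:M) *m B^T in
  Y^T *m Y - 1%:M = B *m ((Q - 1%:M)^T *m (B^T *m B - 1%:M) *m (Q - 1%:M)) *m B^T.
Proof.
move=> QtQ Y; have trE : (Q - 1%:M)^T = Q^T - 1%:M by apply/matrixP => i j; rewrite !mxE eq_sym.
have : (Q - 1%:M)^T *m (Q - 1%:M) = - ((Q - 1%:M)^T + (Q - 1%:M)).
  rewrite trE mulmxBl !mulmxBr QtQ mul1mx !mulmx1.
  by apply/matrixP => i j; rewrite !mxE; ring.
rewrite {}/Y; move: (Q - 1%:M) => E EtE.
have -> : (1%:M + B *m E *m B^T)^T = 1%:M + B *m E^T *m B^T.
  by rewrite linearD /= trmx1 !trmx_mul trmxK mulmxA.
rewrite mulmxDl !mulmxDr !mul1mx mulmx1 mulmxN mulmx1 mulmxDl mulNmx EtE opprK.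
rewrite !mulmxDr !mulmxDl -!mulmxA.
move: (B *m (E *m B^T)) (B *m (E^T *m B^T)) (B *m (E^T *m (B^T *m (B *m (E *m B^T))))).
by move=> X Y Z; apply/matrixP => i j; rewrite !mxE; ring.
Qed.

End OrthogonalUpdate.

Lemma normr_sqr_mul_sqr_sub1_le (R : realType) (t : R) :
  0 <= t <= 1 -> `|t ^+ 2 * (t ^+ 2 - 1)| <= 4^-1.
Proof.
move=> /andP[t0 t1]; have u0 : 0 <= t ^+ 2 by exact: sqr_ge0.
have u1 : t ^+ 2 <= 1 by rewrite expr_le1.
move: (t ^+ 2) u0 u1 => u u0 u1; rewrite ler0_norm; last by nra.
have := sqr_ge0 (u - 2^-1); nra.
Qed.

Section SpectralEstimate.
Variables (R : realType) (N r : nat) (S : 'M[R]_N) (B U : 'M[R]_(N, r)).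
Variables (sigma : 'I_r -> R) (V : 'M[R]_r).
Hypotheses (skewS : S^T = - S) (UtU : U^T *m U = 1%:M).
Hypotheses (VtV : V^T *m V = 1%:M) (VVt : V *m V^T = 1%:M).
Hypothesis sigma01 : forall i, 0 <= sigma i <= 1.

Let Sg := diag_mx (\row_i sigma i).
Hypothesis defB : B = U *m Sg *m V^T.

Let SU := U^T *m S *m U.
Let Q := expm (B^T *m S *m B).
Let sigma_defect := \big[Num.max/0]_(i < r) `|sigma i ^+ 2 * (sigma i ^+ 2 - 1)|.

Let trmx_Sg : Sg^T = Sg. Proof. exact: tr_diag_mx. Qed.

Let opbound_Sg : opbound Sg 1.
Proof. by apply: opbound_diag => // i; have /andP[s0 s1] := sigma01 i; rewrite ger0_norm. Qed.

Let sigma_defect_ge0 : 0 <= sigma_defect. Proof. exact: bigmax_ge_id. Qed.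

Lemma gram_B_sub1 : B^T *m B - 1%:M = V *m (Sg *m Sg - 1%:M) *m V^T.
Proof.
rewrite defB !trmx_mul trmxK trmx_Sg mulmxBr mulmxBl mulmx1 VVt !mulmxA.
by rewrite -[V *m Sg *m U^T *m U]mulmxA UtU mulmx1.
Qed.

Lemma orthogonal_Q : Q^T *m Q = 1%:M.
Proof.
by apply: expm_skew_orthogonal; rewrite !trmx_mul trmxK skewS mulNmx mulmxN mulmxA.
Qed.

Lemma mx_cvgn_conj_expm_sub1 :
  mx_cvgn (fun K => Sg *m exp_sandwich_factor Sg SU K *m Sg) (V^T *m (Q - 1%:M) *m V).
Proof.
rewrite mulmxBr mulmxBl mulmx1 VtV.
apply: (eq_mx_cvgn (X := fun K => exp_partial (Sg *m SU *m Sg) K.+1 - 1%:M)).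
  by move=> K; rewrite exp_partial_sandwich.
apply/(mx_cvgnS (fun K => exp_partial (Sg *m SU *m Sg) K - 1%:M))/mx_cvgnD;
  last exact: mx_cvgn_cst.
apply: (eq_mx_cvgn (X := fun K => V^T *m exp_partial (B^T *m S *m B) K *m V)).
  move=> K; have -> : B^T *m S *m B = V *m (Sg *m SU *m Sg) *m V^T.
    by rewrite defB !trmx_mul trmxK trmx_Sg /SU !mulmxA.
  by rewrite exp_partial_conj.
by apply: mx_cvgnM; [apply: mx_cvgnM; [apply: mx_cvgn_cst|apply: mx_cvgn_exp_partial]|apply: mx_cvgn_cst].
Qed.

Lemma opbound_sigma_defect : opbound (Sg *m (Sg *m Sg - 1%:M) *m Sg) sigma_defect.
Proof.
have -> : Sg *m (Sg *m Sg - 1%:M) *m Sg = diag_mx (\row_i (sigma i ^+ 2 * (sigma i ^+ 2 - 1))).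
  apply/matrixP => i j; rewrite mulmx_diag mul_mx_diag mul_diag_mx !mxE.
  by case: eqP => [->|_]; rewrite /= ?mulr1n ?mulr0n ?subr0 ?mulr0 ?mul0r //; ring.
apply: opbound_diag => [|i]; [exact: sigma_defect_ge0 | exact: (le_bigmax _ (fun i => `|_|) i)].
Qed.

Let Y := 1%:M + B *m (Q - 1%:M) *m B^T.

Lemma specnorm_gram_sub1_le :
  specnorm (Y^T *m Y - 1%:M) <= (expR (specnorm S) - 1) ^+ 2 * sigma_defect.
Proof.
set s := specnorm S; set G := exp_sandwich_factor Sg SU.
set E := Q - 1%:M; set D := Sg *m Sg - 1%:M.
have s0 : 0 <= s := specnorm_ge0 S.
have e0 : 0 <= expR s - 1 by rewrite subr_ge0 (le_trans _ (expR_ge1Dx s)) // lerDl.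
rewrite /Y gram_update_sub1 ?orthogonal_Q // gram_B_sub1.
have -> : B *m (E^T *m (V *m D *m V^T) *m E) *m B^T =
    U *m Sg *m ((V^T *m E *m V)^T *m D *m (V^T *m E *m V)) *m Sg *m U^T.
  by rewrite defB !trmx_mul !trmxK trmx_Sg !mulmxA.
apply: specnorm_le; first by rewrite mulr_ge0 ?sqr_ge0 ?sigma_defect_ge0.
apply: (opbound_cvgn (X := fun K =>
    U *m Sg *m ((Sg *m G K *m Sg)^T *m D *m (Sg *m G K *m Sg)) *m Sg *m U^T)).
  have F := mx_cvgn_conj_expm_sub1.
  do 2 (apply: mx_cvgnM; last exact: mx_cvgn_cst).
  apply: mx_cvgnM; first exact: mx_cvgn_cst.
  apply: mx_cvgnM (mx_cvgnM (mx_cvgn_tr F) (mx_cvgn_cst D)) F.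
move=> K; have -> : U *m Sg *m ((Sg *m G K *m Sg)^T *m D *m (Sg *m G K *m Sg)) *m Sg *m U^T =
    U *m Sg *m Sg *m (G K)^T *m (Sg *m D *m Sg) *m G K *m Sg *m Sg *m U^T.
  by rewrite !trmx_mul trmx_Sg !mulmxA.
have U1 := opbound_isometry UtU; have Ut1 := opbound_tr ler01 U1.
have Sg1 := opbound_Sg; have SDS := opbound_sigma_defect.
have GK := opbound_exp_sandwich_factor K s0 (opbound_conj_isometry S UtU) opbound_Sg.
have GtK := opbound_tr e0 GK.
apply: (opboundW (a := 1 * 1 * 1 * (expR s - 1) * sigma_defect * (expR s - 1) * 1 * 1 * 1)).
  by do 8 (apply: opboundM; [by rewrite ?mulr_ge0 ?ler01 ?sigma_defect_ge0 | | done]).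
by rewrite !mulr1 !mul1r mulrAC expr2.
Qed.

End SpectralEstimate.

Theorem theorem3 (R : realType) (N r : nat) (S : 'M[R]_N) (B : 'M[R]_(N, r))
    (U : 'M[R]_(N, r)) (sigma : 'I_r -> R) (V : 'M[R]_r) :
  (r <= N)%N ->
  S^T = - S ->
  thin_svd B U sigma V ->
  (forall i, 0 <= sigma i <= 1) ->
  let Y := 1%:M + B *m (expm (B^T *m S *m B) - 1%:M) *m B^T in
  specnorm (Y^T *m Y - 1%:M)
    <= (expR (specnorm S) - 1) ^+ 2 *
       \big[Num.max/0]_(i < r) `|sigma i ^+ 2 * (sigma i ^+ 2 - 1)|
  /\ (expR (specnorm S) - 1) ^+ 2 *
       \big[Num.max/0]_(i < r) `|sigma i ^+ 2 * (sigma i ^+ 2 - 1)|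
    <= 4^-1 * (expR (specnorm S) - 1) ^+ 2.
Proof.
move=> _ skewS [UtU VtV VVt _ defB] sigma01 Y.
have defect_le : \big[Num.max/0]_(i < r) `|sigma i ^+ 2 * (sigma i ^+ 2 - 1)| <= 4^-1.
  by apply: bigmax_le => [|i _]; rewrite ?invr_ge0 ?ler0n ?normr_sqr_mul_sqr_sub1_le.
split; first exact: specnorm_gram_sub1_le skewS UtU VtV VVt sigma01 defB.
by rewrite mulrC ler_wpM2r ?sqr_ge0.
Qed.
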